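(* Let $\Phi$ be a real, additive gain graph on $\{1,\dots,n\}$ and let $\mathbf{Q}=(Q_1,\dots,Q_n)\in(\mathbb{E}^d)^n$ with $Q_i\neq Q_j$ whenever $i$ and $j$ are adjacent in $\Phi$. Let $C$ be a circle in $\Phi$ and let $\mathcal{C}=\{h(e):e\in C\}\subseteq\mathcal{H}(\Phi;\mathbf{Q})$. If $C$ is unbalanced, then $\bigcap\mathcal{C}=\emptyset$. If $C$ is balanced and $e\in C$, then $\bigcap\mathcal{C}=\bigcap(\mathcal{C}\setminus\{h(e)\})$.
   Context: $\mathbb{E}^d$ is Euclidean $d$-space with distance $d(\cdot,\cdot)$; $\psi_{ij}(P)=d(P,Q_i)^2-d(P,Q_j)^2$. A real, additive gain graph $\Phi$ on vertex set $\{1,\dots,n\}$ is a finite graph (multiple edges allowed, every edge with two distinct endpoints) with gains $\phi(e;i,j)\in\mathbb{R}$ for each edge $e$ with endpoints $i,j$, satisfying $\phi(e;j,i)=-\phi(e;i,j)$. A circle is a simple closed path; it is balanced if the sum of its gains, read in a consistent direction, is $0$. The Pythagorean arrangement $\mathcal{H}(\Phi;\mathbf{Q})$ consists of the hyperplanes $h(e)=\{P:\psi_{ij}(P)=\phi(e;i,j)\}$, one for each edge $e$ with endpoints $i,j$. *)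

From HB Require Import structures.
From mathcomp Require Import all_boot all_order all_algebra.
From mathcomp Require Import classical_sets.
Set Implicit Arguments. Unset Strict Implicit. Unset Printing Implicit Defensive.
Import Order.TTheory GRing.Theory Num.Theory.
Local Open Scope ring_scope.

(* Euclidean d-space E^d is modelled as row vectors 'rV[R]_d over a real field.
   sqdist P Q = d(P,Q)^2 (the usual Euclidean squared distance). *)
Definition sqdist (R : realFieldType) (d : nat) (P Q : 'rV[R]_d) : R :=
  \sum_(k < d) (P ord0 k - Q ord0 k) ^+ 2.

Definition psi (R : realFieldType) (n d : nat) (Q : 'I_n -> 'rV[R]_d)
  (i j : 'I_n) (P : 'rV[R]_d) : R :=
  sqdist P (Q i) - sqdist P (Q j).

(* A gain graph on {1..n} (here 'I_n) is given by a finite edge type E, endpoint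
   maps src, tgt (with src e != tgt e) and g e = phi(e; src e, tgt e).
   gain_of gives phi(e; i, j), with phi(e; tgt e, src e) = - g e. *)
Definition gain_of (R : realFieldType) (n : nat) (E : finType)
  (src tgt : E -> 'I_n) (g : E -> R) (e : E) (i j : 'I_n) : R :=
  if (i == src e) && (j == tgt e) then g e
  else if (i == tgt e) && (j == src e) then - g e else 0.

(* The hyperplane h(e) = {P : psi_{ij}(P) = phi(e;i,j)} (independent of the
   orientation since psi_ji = - psi_ij). *)
Definition hyp (R : realFieldType) (n d : nat) (E : finType)
  (src tgt : E -> 'I_n) (g : E -> R) (Q : 'I_n -> 'rV[R]_d) (e : E)
  : set 'rV[R]_d :=
  [set P | psi Q (src e) (tgt e) P = g e].

(* The steps (e_k, (v_k, v_{k+1 mod m})) of a closed walk v_0 e_0 v_1 ... e_{m-1} v_0. *)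
Definition circ_steps (n : nat) (E : finType) (vs : seq 'I_n) (es : seq E)
  : seq (E * ('I_n * 'I_n)) := zip es (zip vs (rot 1 vs)).

Definition joins (n : nat) (E : finType) (src tgt : E -> 'I_n)
  (e : E) (a b : 'I_n) : bool :=
  ((src e == a) && (tgt e == b)) || ((src e == b) && (tgt e == a)).

Definition is_circle (n : nat) (E : finType) (src tgt : E -> 'I_n)
  (vs : seq 'I_n) (es : seq E) : Prop :=
  [/\ (0 < size vs)%N, size es = size vs, uniq vs, uniq es &
      all (fun t => joins src tgt t.1 t.2.1 t.2.2) (circ_steps vs es)].

Definition balanced (R : realFieldType) (n : nat) (E : finType)
  (src tgt : E -> 'I_n) (g : E -> R) (vs : seq 'I_n) (es : seq E) : Prop :=
  \sum_(t <- circ_steps vs es) gain_of src tgt g t.1 t.2.1 t.2.2 = 0.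

From HB Require Import structures.
From mathcomp Require Import all_boot all_order all_algebra.
From mathcomp Require Import classical_sets.
Set Implicit Arguments. Unset Strict Implicit. Unset Printing Implicit Defensive.
Import Order.TTheory GRing.Theory Num.Theory.
Local Open Scope ring_scope.
Local Open Scope classical_set_scope.

(* Writing p(v) = d(P, Q_v)^2, each psi_ij(P) = p(i) - p(j) is a difference of
   potentials, so the psi-values along any closed walk sum to 0.  Hence at a
   point P of h(e_k) for every k the gains along the circle sum to 0, and a
   common point exists only if C is balanced.  If C is balanced and P satisfies
   all equations but the one of e, the residual of that equation equals the sum
   of all residuals, which is minus the gain of C, i.e. 0. *)

Lemma big_cycle_sub (T : eqType) (V : zmodType) (s : seq T) (f : T -> V) :
  \sum_(t <- zip s (rot 1 s)) (f t.1 - f t.2) = 0.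
Proof.
rewrite big_split sumrN /= -(big_map (@fst _ _) xpredT f) -(big_map (@snd _ _) xpredT f).
rewrite -/(unzip1 _) -/(unzip2 _) unzip1_zip ?unzip2_zip ?size_rot //.
by rewrite (perm_big s (_ : perm_eq (rot 1 s) s)) ?perm_rot ?subrr.
Qed.

Lemma uniq_map_inj_in (T1 T2 : eqType) (f : T1 -> T2) (s : seq T1) :
  uniq (map f s) -> {in s &, injective f}.
Proof.
elim: s => //= a s IH /andP[fa_notin uniq_fs] x y.
rewrite !inE => /predU1P[-> | xs] /predU1P[-> | ys] // fxy.
- by case/negP: fa_notin; rewrite fxy map_f.
- by case/negP: fa_notin; rewrite -fxy map_f.
- exact: IH.
Qed.

Lemma unzip1_circ_steps (n : nat) (E : finType) (vs : seq 'I_n) (es : seq E) :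
  size es = size vs -> unzip1 (circ_steps vs es) = es.
Proof. by move=> hs; rewrite unzip1_zip // size_zip size_rot minnn hs. Qed.

Lemma unzip2_circ_steps (n : nat) (E : finType) (vs : seq 'I_n) (es : seq E) :
  size es = size vs -> unzip2 (circ_steps vs es) = zip vs (rot 1 vs).
Proof. by move=> hs; rewrite unzip2_zip // size_zip size_rot minnn hs. Qed.

Lemma psiC (R : realFieldType) (n d : nat) (Q : 'I_n -> 'rV[R]_d) i j P :
  psi Q j i P = - psi Q i j P.
Proof. by rewrite /psi opprB. Qed.

Section CircleHyperplanes.

Variables (R : realFieldType) (n d : nat) (E : finType).
Variables (src tgt : E -> 'I_n) (g : E -> R) (Q : 'I_n -> 'rV[R]_d).
Hypothesis src_neq_tgt : forall e, src e != tgt e.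

Definition residual (P : 'rV[R]_d) (t : E * ('I_n * 'I_n)) : R :=
  psi Q t.2.1 t.2.2 P - gain_of src tgt g t.1 t.2.1 t.2.2.

Lemma residual_eq0 P e a b :
  joins src tgt e a b -> residual P (e, (a, b)) = 0 <-> hyp src tgt g Q e P.
Proof.
rewrite /residual /hyp /gain_of /= => /orP[] /andP[/eqP <- /eqP <-].
  by rewrite !eqxx; split=> [/subr0_eq | ->]; rewrite ?subrr.
rewrite [tgt e == src e]eq_sym (negbTE (src_neq_tgt e)) !eqxx /= psiC -opprD.
by split=> [/eqP | ->]; rewrite ?oppr_eq0 ?subrr ?oppr0 // => /eqP/subr0_eq.
Qed.

Variables (vs : seq 'I_n) (es : seq E).
Hypothesis circle : is_circle src tgt vs es.

Lemma sum_residual P :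
  \sum_(t <- circ_steps vs es) residual P t =
  - \sum_(t <- circ_steps vs es) gain_of src tgt g t.1 t.2.1 t.2.2.
Proof.
case: circle => _ hs _ _ _.
rewrite /residual sumrB -(big_map (@snd _ _) xpredT (fun t => psi Q t.1 t.2 P)).
rewrite -/(unzip2 _) unzip2_circ_steps //.
by rewrite (@big_cycle_sub _ _ _ (fun v => sqdist P (Q v))) sub0r.
Qed.

Lemma residual_circ_step_eq0 P t :
  t \in circ_steps vs es -> residual P t = 0 <-> hyp src tgt g Q t.1 P.
Proof.
case: circle => _ _ _ _ /allP joins_steps ht.
by case: t ht => e [a b] ht; apply: residual_eq0; exact: joins_steps ht.
Qed.

Lemma mem_circ_steps_fst t : t \in circ_steps vs es -> t.1 \in es.
Proof.
case: circle => _ hs _ _ _ ht.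
by rewrite -(unzip1_circ_steps hs); apply: map_f.
Qed.

Lemma circle_hyps_balanced P :
  (forall e, e \in es -> hyp src tgt g Q e P) -> balanced src tgt g vs es.
Proof.
move=> hP; apply/eqP; rewrite -oppr_eq0 -(sum_residual P); apply/eqP.
apply: big1_seq => t /andP[_ ht].
by apply/(residual_circ_step_eq0 _ ht)/hP/mem_circ_steps_fst.
Qed.

Lemma circle_hyps_redundant P e :
  balanced src tgt g vs es -> e \in es ->
  (forall e', e' \in es -> e' != e -> hyp src tgt g Q e' P) ->
  hyp src tgt g Q e P.
Proof.
case: circle => _ hs _ ues _ hbal he hP.
have /mapP[t0 ht0 e_t0] : e \in unzip1 (circ_steps vs es).
  by rewrite unzip1_circ_steps.
have uniq_fst : uniq (map fst (circ_steps vs es)).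
  by rewrite -/(unzip1 _) unzip1_circ_steps.
have fst_inj := uniq_map_inj_in uniq_fst.
have : \sum_(t <- circ_steps vs es) residual P t = residual P t0.
  rewrite (bigD1_seq t0 ht0 (map_uniq uniq_fst)) -[RHS]addr0; congr (_ + _).
  apply: big1_seq => t /andP[tt0 ht].
  have te : t.1 != e.
    apply: contra tt0 => /eqP t_e.
    by rewrite (fst_inj t t0) // t_e e_t0.
  by apply/(residual_circ_step_eq0 _ ht)/hP/te/mem_circ_steps_fst.
rewrite sum_residual hbal oppr0 => /esym /(residual_circ_step_eq0 _ ht0).
by rewrite e_t0.
Qed.

End CircleHyperplanes.

Theorem lemma5p2 (R : realFieldType) (n d : nat) (E : finType)
  (src tgt : E -> 'I_n) (g : E -> R) (Q : 'I_n -> 'rV[R]_d)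
  (vs : seq 'I_n) (es : seq E) :
  (forall e, src e != tgt e) ->
  (forall e, Q (src e) != Q (tgt e)) ->
  is_circle src tgt vs es ->
  (~ balanced src tgt g vs es ->
     \bigcap_(e' in [set x | x \in es]) hyp src tgt g Q e' = set0) /\
  (balanced src tgt g vs es -> forall e, e \in es ->
     \bigcap_(e' in [set x | x \in es]) hyp src tgt g Q e' =
     \bigcap_(e' in [set x | (x \in es) && (x != e)]) hyp src tgt g Q e').
Proof.
(* Q_i <> Q_j only makes each h(e) a genuine hyperplane. *)
move=> hne _ hC; split=> [unbal | bal e he].
  apply/seteqP; split=> [P hP | //]; apply: unbal.
  by apply: (circle_hyps_balanced hne hC) => e he; apply: hP.
apply/seteqP; split=> P /= hP e' /=.
  by case/andP=> he' _; apply: hP.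
move=> he'; have [-> | e'e] := eqVneq e' e; last by apply: hP; rewrite /= he' e'e.
apply: (circle_hyps_redundant hne hC) bal he _ => x hx xe.
by apply: hP; rewrite /= hx xe.
Qed.
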